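(* Let $\chi:VB_n\to M_n$ be the homomorphism with $\chi(\sigma_i)=s_i$, $\chi(\rho_i)=t_i$ ($i=1,\dots,n-1$), and let $\eta_1,\eta_2:M_n\to S_n$ be the homomorphisms with $\eta_1(s_i)=1$, $\eta_1(t_i)=(i\ i{+}1)$, and $\eta_2(s_i)=\eta_2(t_i)=(i\ i{+}1)$. Then: (i) $H_n=\ker(\eta_1\circ\chi)$; (ii) $VP_n=\ker(\eta_2\circ\chi)$; (iii) $H_n\cap VP_n=\ker\chi$.
   Context: The virtual braid group $VB_n$ is the group with generators $\sigma_i,\rho_i$ ($i=1,\dots,n-1$) and defining relations: $\sigma_i\sigma_{i+1}\sigma_i=\sigma_{i+1}\sigma_i\sigma_{i+1}$ ($1\le i\le n-2$); $\sigma_i\sigma_j=\sigma_j\sigma_i$ ($|i-j|\geq 2$); $\rho_i\rho_{i+1}\rho_i=\rho_{i+1}\rho_i\rho_{i+1}$ ($1\le i\le n-2$); $\rho_i\rho_j=\rho_j\rho_i$ ($|i-j|\geq 2$); $\rho_i^2=1$; $\sigma_i\rho_j=\rho_j\sigma_i$ ($|i-j|\geq2$); $\rho_i\rho_{i+1}\sigma_i=\sigma_{i+1}\rho_i\rho_{i+1}$ ($1\le i\le n-2$). $M_n=S_n\rtimes S_n$, where the second factor acts on the first by conjugation; $s_i$ is the transposition $(i\ i{+}1)$ in the first factor and $t_i$ the transposition $(i\ i{+}1)$ in the second factor. $H_n$ is the normal closure of $\langle\sigma_1,\dots,\sigma_{n-1}\rangle$ in $VB_n$. $VP_n$ is the kernel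 of $\nu:VB_n\to S_n$, $\nu(\sigma_i)=\nu(\rho_i)=(i\ i{+}1)$. The kernel $\ker\chi$ is called the extended pure braid group $EP_n$. *)

(* Virtual braid group VB_n presented by words modulo the
   congruence generated by free cancellation and the defining relations. *)
From mathcomp Require Import all_boot all_fingroup.
Set Implicit Arguments. Unset Strict Implicit. Unset Printing Implicit Defensive.
Local Open Scope group_scope.

(* Transposition (i+1 i+2) (1-based) = (i i+1) on 'I_n (0-based), for i+1 < n. *)
Definition adj (n i : nat) : 'S_n :=
  match @idP (i.+1 < n)%N with
  | ReflectT h => tperm (Ordinal (ltnW h)) (Ordinal h)
  | ReflectF _ => 1
  end.

(* A letter (s, i, e): s = true for sigma, false for rho; index i : 'I_n.-1
   stands for generator number i+1 (1 <= i+1 <= n-1); e = true for inverse. *)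
Definition letter (n : nat) := (bool * 'I_n.-1 * bool)%type.
Definition word (n : nat) := seq (letter n).

Definition sig {n} (i : 'I_n.-1) : letter n := (true, i, false).
Definition rho {n} (i : 'I_n.-1) : letter n := (false, i, false).
Definition linv {n} (x : letter n) : letter n := (x.1.1, x.1.2, ~~ x.2).
Definition winv {n} (w : word n) : word n := rev (map linv w).

Definition far {n} (i j : 'I_n.-1) : bool := (i.+2 <= j) || (j.+2 <= i).

Inductive vb_rel (n : nat) : word n -> word n -> Prop :=
| R_sbraid (i j : 'I_n.-1) : val j = (val i).+1 ->
    vb_rel [:: sig i; sig j; sig i] [:: sig j; sig i; sig j]
| R_sfar (i j : 'I_n.-1) : far i j -> vb_rel [:: sig i; sig j] [:: sig j; sig i]
| R_rbraid (i j : 'I_n.-1) : val j = (val i).+1 ->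
    vb_rel [:: rho i; rho j; rho i] [:: rho j; rho i; rho j]
| R_rfar (i j : 'I_n.-1) : far i j -> vb_rel [:: rho i; rho j] [:: rho j; rho i]
| R_rsq (i : 'I_n.-1) : vb_rel [:: rho i; rho i] [::]
| R_mfar (i j : 'I_n.-1) : far i j -> vb_rel [:: sig i; rho j] [:: rho j; sig i]
| R_mixed (i j : 'I_n.-1) : val j = (val i).+1 ->
    vb_rel [:: rho i; rho j; sig i] [:: sig j; rho i; rho j].

Inductive vb_eq (n : nat) : word n -> word n -> Prop :=
| E_refl w : vb_eq w w
| E_sym u v : vb_eq u v -> vb_eq v u
| E_trans u v w : vb_eq u v -> vb_eq v w -> vb_eq u w
| E_ctx a b u v : vb_eq u v -> vb_eq (a ++ u ++ b) (a ++ v ++ b)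
| E_cancel (x : letter n) : vb_eq [:: x; linv x] [::]
| E_rel u v : vb_rel u v -> vb_eq u v.

Inductive nc_sig (n : nat) : word n -> Prop :=
| NC_nil : nc_sig [::]
| NC_cons (g : word n) (i : 'I_n.-1) (e : bool) (w : word n) :
    nc_sig w -> nc_sig (g ++ [:: (true, i, e)] ++ winv g ++ w).

(* H_n: normal closure of <sigma_1,...,sigma_{n-1}> in VB_n. *)
Definition inH {n} (w : word n) : Prop := exists u, nc_sig u /\ vb_eq u w.

Definition nu_letter {n} (x : letter n) : 'S_n :=
  if x.2 then (adj n x.1.2)^-1 else adj n x.1.2.
Definition nu {n} (w : word n) : 'S_n := \prod_(x <- w) nu_letter x.

(* M_n = S_n x| S_n, second factor acting on first by conjugation:
   (g,h)(g',h') = (g * (h g' h^-1), h h'). *)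
Definition Mn (n : nat) := ('S_n * 'S_n)%type.
Definition mmul {n} (x y : Mn n) : Mn n :=
  (x.1 * (x.2 * y.1 * x.2^-1), x.2 * y.2).
Definition mone {n} : Mn n := (1, 1).
Definition minv {n} (x : Mn n) : Mn n :=
  (x.2^-1 * x.1^-1 * x.2, x.2^-1).
Definition s_ {n} (i : 'I_n.-1) : Mn n := (adj n i, 1).
Definition t_ {n} (i : 'I_n.-1) : Mn n := (1, adj n i).

Definition chi_letter {n} (x : letter n) : Mn n :=
  let g := if x.1.1 then s_ x.1.2 else t_ x.1.2 in
  if x.2 then minv g else g.
Definition chi {n} (w : word n) : Mn n := foldr (fun x acc => mmul (chi_letter x) acc) mone w.

Definition eta1 {n} (x : Mn n) : 'S_n := x.2.
Definition eta2 {n} (x : Mn n) : 'S_n := x.1 * x.2.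

From mathcomp Require Import all_boot all_fingroup zify.
Set Implicit Arguments. Unset Strict Implicit. Unset Printing Implicit Defensive.
Local Open Scope group_scope.

(* Write ν_ρ for the map VB_n -> S_n sending ρ_i to (i i+1) and σ_i to 1.
   Then χ(w) = (ν(w) ν_ρ(w)^-1, ν_ρ(w)), so η₂∘χ = ν and η₁∘χ = ν_ρ; this is
   (ii), and (iii) follows from (i) and (ii).  For (i), ν_ρ kills every
   conjugate of σ_i^±1, so H_n lies in its kernel.  Conversely, conjugating
   past ρ-letters shows that every w equals h r with h in H_n and r a word in
   the ρ_i.  If ν_ρ(w) = 1 then r maps to 1 in S_n, and since the ρ_i satisfy
   the Coxeter relations, r = 1 in VB_n.  This last step is the Coxeter
   presentation of S_n: a word in s_0, ..., s_m reduces to a word in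
   s_0, ..., s_(m-1) followed by a descending run s_m s_(m-1) ... s_a, and a is
   read off from the image of the point m+1. *)

Lemma tperm_braid (T : finType) (a b c : T) : a != b -> b != c -> a != c ->
  tperm a b * tperm b c * tperm a b = tperm b c * tperm a b * tperm b c.
Proof.
move=> ab bc ac.
have -> : tperm a b * tperm b c * tperm a b = tperm b c ^ tperm a b
  by rewrite conjgE tpermV mulgA.
have -> : tperm b c * tperm a b * tperm b c = tperm a b ^ tperm b c
  by rewrite conjgE tpermV mulgA.
by rewrite !tpermJ tpermR tpermL (tpermD ac bc) tpermD // eq_sym.
Qed.

Lemma tperm_comm (T : finType) (a b c d : T) :
  a != c -> a != d -> b != c -> b != d ->
  tperm a b * tperm c d = tperm c d * tperm a b.
Proof.
move=> ac ad bc bd.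
have conj_cd : tperm c d ^ tperm a b = tperm c d by rewrite tpermJ !tpermD.
by rewrite -{2}conj_cd conjgE tpermV -!mulgA tperm2 mulg1.
Qed.

Lemma adj_tperm n k (lt_k1n : k.+1 < n) :
  adj n k = tperm (Ordinal (ltnW lt_k1n)) (Ordinal lt_k1n).
Proof.
rewrite /adj; destruct (@idP (k.+1 < n)) as [h | h]; last by [].
by rewrite (bool_irrelevance h lt_k1n).
Qed.

Lemma adj_out n k : n <= k.+1 -> adj n k = 1.
Proof. by rewrite leqNgt /adj; destruct (@idP (k.+1 < n)) as [h | h] => // /negP. Qed.

Lemma adj_fix n k (p : 'I_n) : val p != k -> val p != k.+1 -> adj n k p = p.
Proof.
move=> pk pk1; have [lt_k1n | ge_k1n] := ltnP k.+1 n; last by rewrite adj_out ?perm1.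
by rewrite adj_tperm tpermD // -val_eqE eq_sym.
Qed.

Lemma adj_succ n k (p : 'I_n) : val p = k.+1 -> val (adj n k p) = k.
Proof.
move=> pk; have lt_k1n : k.+1 < n by rewrite -pk ltn_ord.
by rewrite adj_tperm (_ : p = Ordinal lt_k1n) ?tpermR //; apply: val_inj.
Qed.

Lemma adj_sq n k : adj n k * adj n k = 1.
Proof. by rewrite /adj; destruct (@idP (k.+1 < n)); rewrite ?tperm2 ?mulg1. Qed.

Lemma adj_comm n k j : (k.+2 <= j) || (j.+2 <= k) ->
  adj n k * adj n j = adj n j * adj n k.
Proof.
move=> far_kj.
have [lt_k1n | ?] := ltnP k.+1 n; last by rewrite (@adj_out n k) ?mulg1 ?mul1g.
have [lt_j1n | ?] := ltnP j.+1 n; last by rewrite (@adj_out n j) ?mulg1 ?mul1g.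
rewrite (adj_tperm lt_k1n) (adj_tperm lt_j1n).
by apply: tperm_comm; rewrite -val_eqE /=; lia.
Qed.

Lemma adj_braid n k : k.+2 < n ->
  adj n k * adj n k.+1 * adj n k = adj n k.+1 * adj n k * adj n k.+1.
Proof.
move=> lt_k2n; rewrite !(adj_tperm (ltnW lt_k2n)) (adj_tperm lt_k2n).
by apply: tperm_braid; rewrite -val_eqE /=; lia.
Qed.

Section CoxeterPresentation.

Variable n : nat.

Definition adj_prod (w : seq nat) : 'S_n := \prod_(k <- w) adj n k.

Variable eqv : seq nat -> seq nat -> Prop.

Hypothesis eqv_refl : forall a, eqv a a.
Hypothesis eqv_sym : forall a b, eqv a b -> eqv b a.
Hypothesis eqv_trans : forall a b c, eqv a b -> eqv b c -> eqv a c.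
Hypothesis eqv_cat : forall a a' b b', eqv a a' -> eqv b b' -> eqv (a ++ b) (a' ++ b').
Hypothesis eqv_sq : forall k, k.+1 < n -> eqv [:: k; k] [::].
Hypothesis eqv_far : forall k j, k.+1 < n -> j.+1 < n -> (k.+2 <= j) || (j.+2 <= k) ->
  eqv [:: k; j] [:: j; k].
Hypothesis eqv_braid : forall k, k.+2 < n -> eqv [:: k; k.+1; k] [:: k.+1; k; k.+1].
Hypothesis adj_prod_eqv : forall a b, eqv a b -> adj_prod a = adj_prod b.

Lemma eqv_catl a b b' : eqv b b' -> eqv (a ++ b) (a ++ b').
Proof. exact: eqv_cat. Qed.

Lemma eqv_catr a a' b : eqv a a' -> eqv (a ++ b) (a' ++ b).
Proof. by move/eqv_cat; apply. Qed.

Lemma eqv_slide k s : k.+1 < n ->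
  all (fun j => (j.+1 < n) && ((k.+2 <= j) || (j.+2 <= k))) s ->
  eqv (s ++ [:: k]) (k :: s).
Proof.
move=> lt_k1n; elim: s => [|j s IHs] //= /andP[/andP[lt_j1n far_kj] far_ks].
apply: (eqv_trans (eqv_catl [:: j] (IHs far_ks))).
by apply: (eqv_catr s (eqv_far _ _ _)); rewrite // orbC.
Qed.

Lemma eqv_braid_slide i A T : i.+2 < n ->
  all (fun j => i.+2 <= j < n.-1) A -> all (fun j => j < i) T ->
  eqv (A ++ [:: i.+1; i] ++ T ++ [:: i.+1]) (i :: A ++ [:: i.+1; i] ++ T).
Proof.
move=> lt_i2n hA hT.
apply: (eqv_trans (b := A ++ [:: i.+1; i; i.+1] ++ T)).
  apply/eqv_catl/(eqv_catl [:: i.+1; i])/eqv_slide => //.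
  by apply: sub_all hT => j /= lt_ji; apply/andP; split; lia.
apply: (eqv_trans (b := A ++ [:: i; i.+1; i] ++ T)).
  exact/eqv_catl/eqv_catr/eqv_sym/eqv_braid.
rewrite (catA A [:: i]); apply: (eqv_catr _ (eqv_slide _ _)); first lia.
by apply: sub_all hA => j /= /andP[le_i2j lt_jn]; apply/andP; split; lia.
Qed.

(* With [a + l = m.+1], [rev (iota a l)] is the descending run [m; m-1; ...; a]. *)
Definition has_normal_form m w := exists u a l,
  [/\ all (fun k => k < m) u, a + l = m.+1 & eqv w (u ++ rev (iota a l))].

Lemma descent_rcons m a l k : m.+1 < n -> a + l = m.+1 -> k <= m ->
  has_normal_form m (rev (iota a l) ++ [:: k]).
Proof.
(* [k] commutes past the run, extends it, cancels its last letter [a], or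
   (for a < k) is traded for [k.-1] on the left by a braid relation. *)
move=> lt_m1n al le_km.
have [lt_k1a | le_ak1] := ltnP k.+1 a.
  exists [:: k], a, l; split => //=; first by rewrite andbT; lia.
  apply: eqv_slide; first lia.
  by apply/allP => j; rewrite mem_rev mem_iota => /andP[? ?]; apply/andP; split; lia.
have [eq_k1a | lt_ak1] := eqVneq k.+1 a.
  exists [::], k, l.+1; split => //; first lia.
  by rewrite /= rev_cons cats1 eq_k1a.
have [eq_ka | lt_ak] := eqVneq k a.
  case: l al => [|l] al; first lia.
  exists [::], a.+1, l; split => //; first lia.
  rewrite /= rev_cons -cats1 -catA eq_ka /=.
  by rewrite -{2}[rev _]cats0; apply/eqv_catl/eqv_sq; lia.
case: k le_km le_ak1 lt_ak1 lt_ak => [|i] le_km le_ak1 lt_ak1 lt_ak; first lia.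
exists [:: i], a, l; split => //=; first by rewrite andbT; lia.
have -> : l = (i - a) + (2 + (m - i.+1)) by lia.
rewrite !iotaD !rev_cat /= (_ : a + (i - a) = i) -?catA /=; last by lia.
apply: eqv_braid_slide; first lia.
  by apply/allP => j; rewrite mem_rev mem_iota => /andP[? ?]; apply/andP; split; lia.
by apply/allP => j; rewrite mem_rev mem_iota => /andP[? ?]; lia.
Qed.

Lemma normal_form_rcons m w k : m.+1 < n -> k <= m ->
  has_normal_form m w -> has_normal_form m (rcons w k).
Proof.
move=> lt_m1n le_km [u [a [l [hu al hw]]]].
have [u' [a' [l' [hu' al' hd]]]] := descent_rcons lt_m1n al le_km.
exists (u ++ u'), a', l'; split => //; first by rewrite all_cat hu hu'.
rewrite -cats1 -catA; apply: (eqv_trans (eqv_catr _ hw)).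
by rewrite -catA; apply: eqv_catl.
Qed.

Lemma normal_formP m w : m.+1 < n -> all (fun k => k <= m) w -> has_normal_form m w.
Proof.
move=> lt_m1n; elim/last_ind: w => [|w k IHw].
  by exists [::], m.+1, 0; split; rewrite ?addn0.
by rewrite all_rcons => /andP[le_km hw]; apply: normal_form_rcons => //; apply: IHw.
Qed.

Lemma adj_prod_cat a b : adj_prod (a ++ b) = adj_prod a * adj_prod b.
Proof. exact: big_cat. Qed.

Lemma adj_prod_fix w (p : 'I_n) : all (fun k => k.+1 < p) w -> adj_prod w p = p.
Proof.
elim: w => [|k w IHw] /=; first by rewrite /adj_prod big_nil perm1.
case/andP=> lt_k1p hw; rewrite /adj_prod big_cons permM adj_fix ?IHw //.
  by rewrite neq_ltn orbC (ltnW lt_k1p).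
by rewrite neq_ltn orbC lt_k1p.
Qed.

Lemma adj_prod_descent a l (p : 'I_n) : val p = a + l ->
  val (adj_prod (rev (iota a l)) p) = a.
Proof.
elim: l a => [|l IHl] a pal; first by rewrite /adj_prod big_nil perm1 pal addn0.
rewrite /= rev_cons -cats1 adj_prod_cat permM /adj_prod big_seq1.
by apply: adj_succ; apply: IHl; rewrite pal addSnnS.
Qed.

Lemma adj_prod_eq1_lt m w : m < n -> all (fun k => k < m) w ->
  adj_prod w = 1 -> eqv w [::].
Proof.
elim: m w => [|m IHm] w lt_mn hw w1; first by case: w hw {w1}.
have [u [a [l [hu al hw_nf]]]] := normal_formP lt_mn hw.
have prod_u_run : adj_prod u * adj_prod (rev (iota a l)) = 1.
  by rewrite -adj_prod_cat -(adj_prod_eqv hw_nf).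
(* [u] fixes the point [m.+1] and the run sends it to [a], so the run is empty. *)
have l0 : l = 0.
  have fix_u : adj_prod u (Ordinal lt_mn) = Ordinal lt_mn.
    by apply: adj_prod_fix; apply: sub_all hu.
  have /(congr1 val) := congr1 (fun s : 'S_n => s (Ordinal lt_mn)) prod_u_run.
  by rewrite /= permM fix_u adj_prod_descent ?perm1 //=; lia.
move: hw_nf prod_u_run; rewrite l0 /= cats0 [adj_prod [::]]big_nil mulg1 => hw_u u1.
exact: (eqv_trans hw_u (IHm u (ltnW lt_mn) hu u1)).
Qed.

Lemma adj_prod_eq1 w : all (fun k => k.+1 < n) w -> adj_prod w = 1 -> eqv w [::].
Proof.
case: w => [|k w] hw; first by move=> _; apply: eqv_refl.
have lt_k1n : k.+1 < n by case/andP: hw.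
apply: (adj_prod_eq1_lt (m := n.-1)); first lia.
by apply: sub_all hw => j /=; lia.
Qed.

End CoxeterPresentation.

Section LetterMaps.

Variables (n : nat) (gT : finGroupType) (f : letter n -> gT).
Hypothesis f_linv : forall x, f (linv x) = (f x)^-1.

Lemma prod_winv (g : word n) :
  \prod_(x <- winv g) f x = (\prod_(x <- g) f x)^-1.
Proof.
elim: g => [|x g IHg]; first by rewrite /winv !big_nil invg1.
rewrite /winv /= rev_cons -cats1 big_cat /= -/(winv g) IHg big_seq1.
by rewrite !big_cons f_linv invMg.
Qed.

Hypothesis f_rel : forall u v, vb_rel u v -> \prod_(x <- u) f x = \prod_(x <- v) f x.

Lemma prod_vb_eq u v : vb_eq u v -> \prod_(x <- u) f x = \prod_(x <- v) f x.
Proof.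
elim=> {u v} [// | u v _ -> // | u v w _ -> _ -> // | a b u v _ eq_uv | x | u v /f_rel //].
  by rewrite !big_cat eq_uv.
by rewrite !big_cons big_nil mulg1 f_linv mulgV.
Qed.

End LetterMaps.

Section VirtualBraids.

Variable n : nat.
Implicit Types (u v w g h : word n) (x : letter n).

Lemma eta2_chi w : eta2 (chi w) = nu w.
Proof.
rewrite /eta2; elim: w => [|x w IHw]; first by rewrite /nu big_nil mulg1.
rewrite /nu big_cons -/(nu w) -IHw [chi _]/(mmul _ (chi w)) /mmul /= !mulgA mulgKV.
case: x => [[[] i] []]; rewrite /chi_letter /nu_letter /= ?invg1 ?mulg1 ?mul1g //.
by rewrite mulVg mul1g.
Qed.

Definition nu_rho_letter x : 'S_n := if x.1.1 then 1 else nu_letter x.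
Definition nu_rho w : 'S_n := \prod_(x <- w) nu_rho_letter x.

Lemma nu_rho_cat u v : nu_rho (u ++ v) = nu_rho u * nu_rho v.
Proof. exact: big_cat. Qed.

Lemma eta1_chi w : eta1 (chi w) = nu_rho w.
Proof.
rewrite /eta1; elim: w => [|x w IHw]; first by rewrite /nu_rho big_nil.
rewrite /nu_rho big_cons -/(nu_rho w) -IHw /=; congr (_ * _).
by case: x => [[[] i] []]; rewrite /chi_letter /nu_rho_letter /nu_letter /= ?invg1.
Qed.

Lemma nu_rho_letter_linv x : nu_rho_letter (linv x) = (nu_rho_letter x)^-1.
Proof.
by case: x => [[[] i] []]; rewrite /nu_rho_letter /nu_letter /= ?invg1 ?invgK.
Qed.

Lemma nu_rho_rel u v : vb_rel u v -> nu_rho u = nu_rho v.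
Proof.
case=> [i j ji | i j far_ij | i j ji | i j far_ij | i | i j _ | i j _];
  rewrite /nu_rho !big_cons !big_nil /nu_rho_letter /nu_letter /= ?mulg1 ?mul1g //.
- rewrite ji !mulgA; apply: adj_braid.
  by have := ltn_ord j; rewrite ji /=; lia.
- exact: adj_comm.
- exact: adj_sq.
Qed.

Lemma nu_rho_vb_eq u v : vb_eq u v -> nu_rho u = nu_rho v.
Proof. exact: (prod_vb_eq nu_rho_letter_linv nu_rho_rel). Qed.

Lemma nu_rho_nc_sig u : nc_sig u -> nu_rho u = 1.
Proof.
elim=> [|g i e w _ IHw]; first exact: big_nil.
rewrite !nu_rho_cat IHw /nu_rho (prod_winv nu_rho_letter_linv).
by rewrite big_seq1 /nu_rho_letter /= mul1g mulg1 mulgV.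
Qed.

Lemma linvK : involutive (@linv n).
Proof. by case=> [[b i] e]; rewrite /linv /= negbK. Qed.

Lemma vb_eq_cat u u' v v' : vb_eq u u' -> vb_eq v v' -> vb_eq (u ++ v) (u' ++ v').
Proof.
move=> eq_u eq_v; apply: (E_trans (E_ctx [::] v eq_u)).
by have := E_ctx u' [::] eq_v; rewrite !cats0.
Qed.

Lemma vb_eq_cancel_inv x u v : vb_eq (u ++ [:: linv x; x] ++ v) (u ++ v).
Proof. by have := E_ctx u v (E_cancel (linv x)); rewrite linvK. Qed.

Lemma vb_eq_rho_inv (i : 'I_n.-1) : vb_eq [:: (false, i, true)] [:: rho i].
Proof.
apply: (E_trans (v := [:: (false, i, true)] ++ [:: rho i; rho i])).
  by have := E_ctx [:: (false, i, true)] [::] (E_sym (E_rel (R_rsq i))); rewrite cats0.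
exact: (E_ctx [::] [:: rho i] (E_cancel (false, i, true))).
Qed.

Lemma nc_sig_cat u v : nc_sig u -> nc_sig v -> nc_sig (u ++ v).
Proof. by elim=> [//|g i e w _ IHw] nc_v; rewrite -!catA; apply/NC_cons/IHw. Qed.

Definition wconj x u : word n := x :: u ++ [:: linv x].

Lemma wconj_cat x u v : vb_eq (wconj x (u ++ v)) (wconj x u ++ wconj x v).
Proof.
apply: E_sym; rewrite /wconj /= -!catA.
exact: (vb_eq_cancel_inv x (x :: u) (v ++ [:: linv x])).
Qed.

Lemma inH_vb_eq u v : vb_eq u v -> inH u -> inH v.
Proof. by move=> eq_uv [h [nc_h eq_hu]]; exists h; split; last exact: E_trans eq_uv. Qed.

Lemma inH_nil : inH ([::] : word n).
Proof. by exists [::]; split; [apply: NC_nil | apply: E_refl]. Qed.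

Lemma inH_sig (i : 'I_n.-1) e : inH [:: (true, i, e)].
Proof. by exists [:: (true, i, e)]; split; [apply: (NC_cons [::] _ _ (NC_nil n)) | apply: E_refl]. Qed.

Lemma inH_cat u v : inH u -> inH v -> inH (u ++ v).
Proof.
move=> [h [nc_h eq_hu]] [h' [nc_h' eq_h'v]].
by exists (h ++ h'); split; [apply: nc_sig_cat | apply: vb_eq_cat].
Qed.

Lemma inH_wconj_nc_sig x u : nc_sig u -> inH (wconj x u).
Proof.
elim=> [|g i e w nc_w IHw].
  by apply: (inH_vb_eq (E_sym (E_cancel x))); apply: inH_nil.
rewrite catA catA -(catA g); apply: (inH_vb_eq (E_sym (wconj_cat _ _ _))).
apply: inH_cat IHw.
exists ((x :: g) ++ [:: (true, i, e)] ++ winv (x :: g) ++ [::]); split.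
  exact/NC_cons/NC_nil.
by rewrite /wconj /winv /= rev_cons -cats1 -!catA cats0; apply: E_refl.
Qed.

Lemma inH_wconj x u : inH u -> inH (wconj x u).
Proof.
move=> [h [nc_h eq_hu]]; apply: (inH_vb_eq _ (inH_wconj_nc_sig x nc_h)).
exact: (vb_eq_cat (E_refl [:: x]) (vb_eq_cat eq_hu (E_refl _))).
Qed.

Lemma nu_rho_inH u : inH u -> nu_rho u = 1.
Proof. by move=> [h [nc_h eq_hu]]; rewrite -(nu_rho_vb_eq eq_hu) nu_rho_nc_sig. Qed.

Lemma inH_rho_decomposition w :
  exists h (l : seq 'I_n.-1), inH h /\ vb_eq w (h ++ map rho l).
Proof.
elim: w => [|x w [h [l [inH_h eq_w]]]].
  by exists [::], [::]; split; [apply: inH_nil | apply: E_refl].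
case: x => [[[] i] e].
  exists ((true, i, e) :: h), l; split; first exact: (inH_cat (inH_sig i e) inH_h).
  exact: (vb_eq_cat (E_refl [:: (true, i, e)]) eq_w).
set x := (false, i, e).
have rho_x : vb_eq [:: rho i] [:: x].
  by case: e @x; [apply: E_sym (vb_eq_rho_inv i) | apply: E_refl].
exists (wconj x h), (i :: l); split; first exact: inH_wconj.
apply: (E_trans (vb_eq_cat (E_refl [:: x]) eq_w)).
apply: (E_trans (E_sym (vb_eq_cancel_inv x (x :: h) (map rho l)))).
rewrite /wconj -cat_cons -catA; apply: (vb_eq_cat (E_refl (x :: h))).
exact: (vb_eq_cat (E_refl [:: linv x]) (vb_eq_cat (E_sym rho_x) (E_refl _))).
Qed.

(* Letters [k] with [n <= k.+1] are dropped, in accordance with [adj n k = 1]. *)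
Definition rho_word (l : seq nat) : word n := map rho (pmap insub l).

Lemma rho_word_cat a b : rho_word (a ++ b) = rho_word a ++ rho_word b.
Proof. by rewrite /rho_word pmap_cat map_cat. Qed.

Lemma rho_word_cons_val (i : 'I_n.-1) l : rho_word (val i :: l) = rho i :: rho_word l.
Proof. by rewrite /rho_word /= valK. Qed.

Lemma rho_word_map_val (l : seq 'I_n.-1) : rho_word (map val l) = map rho l.
Proof. by rewrite /rho_word (map_pK valK). Qed.

Lemma nu_rho_rho_word l : nu_rho (rho_word l) = adj_prod n l.
Proof.
rewrite /nu_rho /rho_word big_map -(big_map val xpredT (adj n)).
rewrite (pmap_filter (@insubK _ _ _)) big_filter big_mkcond /adj_prod.
apply: eq_bigr => k _; case: insubP => [// | /negP out_k].
by rewrite adj_out //; lia.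
Qed.

Lemma rho_word_adj_prod_eq1 l : all (fun k => k.+1 < n) l ->
  adj_prod n l = 1 -> vb_eq (rho_word l) [::].
Proof.
have ord_of k : k.+1 < n -> exists i : 'I_n.-1, val i = k.
  move=> lt_k1n; have lt_kn1 : k < n.-1 by lia.
  by exists (Ordinal lt_kn1).
apply: (adj_prod_eq1 (eqv := fun a b => vb_eq (rho_word a) (rho_word b))).
- by move=> a; apply: E_refl.
- by move=> a b; apply: E_sym.
- by move=> a b c; apply: E_trans.
- by move=> a a' b b' eq_a eq_b; rewrite !rho_word_cat; apply: vb_eq_cat.
- move=> k /ord_of [i <-]; rewrite !rho_word_cons_val.
  exact: E_rel (R_rsq i).
- move=> k j /ord_of [i <-] /ord_of [i' <-] far_ii'; rewrite !rho_word_cons_val.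
  exact: E_rel (R_rfar far_ii').
- move=> k lt_k2n; have [i ik] := ord_of k (ltnW lt_k2n).
  have [i' i'k] := ord_of k.+1 lt_k2n.
  rewrite -i'k -ik !rho_word_cons_val; apply: E_rel (R_rbraid _).
  by rewrite ik i'k.
- by move=> a b /nu_rho_vb_eq; rewrite !nu_rho_rho_word.
Qed.

Lemma inH_nu_rho w : inH w <-> nu_rho w = 1.
Proof.
split; first exact: nu_rho_inH.
have [h [l [inH_h eq_w]]] := inH_rho_decomposition w.
rewrite (nu_rho_vb_eq eq_w) nu_rho_cat (nu_rho_inH inH_h) mul1g.
rewrite -rho_word_map_val nu_rho_rho_word => prod_l.
have l_bound : all (fun k => k.+1 < n) (map val l).
  by apply/allP => _ /mapP[i _ ->] /=; have := ltn_ord i; lia.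
have := vb_eq_cat (E_refl h) (rho_word_adj_prod_eq1 l_bound prod_l).
rewrite rho_word_map_val cats0 => eq_h.
exact: inH_vb_eq (E_sym (E_trans eq_w eq_h)) inH_h.
Qed.

End VirtualBraids.

Theorem proposition7p3 (n : nat) :
  (forall w : word n, inH w <-> eta1 (chi w) = 1) /\
  (forall w : word n, nu w = 1 <-> eta2 (chi w) = 1) /\
  (forall w : word n, (inH w /\ nu w = 1) <-> chi w = mone).
Proof.
split; [|split] => w; first by rewrite eta1_chi; apply: inH_nu_rho.
  by rewrite eta2_chi.
rewrite inH_nu_rho -eta1_chi -eta2_chi /eta1 /eta2 /mone.
by case: (chi w) => a b /=; split=> [[-> ]|[-> ->]]; rewrite ?mulg1 // => ->.
Qed.
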